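(* Let $r,s,t,u,v$ be non-negative integers with $u+v=4s-2r+t^2+2t+4$. Let $G=\left(r,\,r,\,s,\,s+\binom{t+1}{2},\,s+\binom{t+2}{2},\,u\right)$ and $H=\left(r,\,r,\,s,\,s+\binom{t+1}{2},\,s+\binom{t+2}{2},\,v\right)$, with interesting factors $g(x)$ and $h(x)$ respectively. Then $$g(x)=-h(-x+6s+2t^2+4t+6).$$
   Context: All graphs are finite and simple. For integers $1\le j\le k$, a $(j,k)$-biclique is a graph whose vertex set is the disjoint union of a $j$-clique and a $k$-clique, with an arbitrary set of additional edges each joining a vertex of the $j$-clique to a vertex of the $k$-clique. For non-negative integers $a,b,c,d,e,f$, the notation $(a,b,c,d,e,f)$ denotes the $(3,k)$-biclique with $k=a+b+c+d+e+f$, whose $3$-clique is $\{v_1,v_2,v_3\}$, in which every vertex of the $k$-clique is adjacent to exactly one or exactly two of $v_1,v_2,v_3$, and exactly $a$ (resp. $b$, $c$) vertices of the $k$-clique are adjacent to $v_1$ only (resp. $v_2$ only, $v_3$ only), and exactly $d$ (resp. $e$, $f$) vertices of the $k$-clique are adjacent to exactly $v_2$ and $v_3$ (resp. exactly $v_1$ and $v_3$, exactly $v_1$ and $v_2$). This determines the graph up to isomorphism. The interesting factor of a $(3,k)$-biclique $G$ is the cubic polynomial $P_G(x)/(x)_k$, where $P_G$ is the chromatic polynomial and $(x)_k=x(x-1)\cdots(x-k+1)$. *)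

From HB Require Import structures.
From mathcomp Require Import all_boot all_order all_algebra.
Set Implicit Arguments. Unset Strict Implicit. Unset Printing Implicit Defensive.
Import Order.TTheory GRing.Theory Num.Theory.

Definition ncol (T : finType) (e : rel T) (n : nat) : nat :=
  #|[set f : {ffun T -> 'I_n} | [forall x, forall y, e x y ==> (f x != f y)]]|.

Definition bk (a b c d e f : nat) : nat := a + b + c + d + e + f.

(* Vertex set: the 3-clique {v1,v2,v3} = inl 0, inl 1, inl 2, and the k-clique
   inr j, j < k. *)
Definition bvert (a b c d e f : nat) : finType := ('I_3 + 'I_(bk a b c d e f))%type.

(* The block of the k-clique vertex j:
   0 : adjacent to v1 only  (first a vertices)
   1 : v2 only (next b), 2 : v3 only (next c),
   3 : v2 and v3 (next d), 4 : v1 and v3 (next e), 5 : v1 and v2 (last f). *)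
Definition bcls (a b c d e : nat) (j : nat) : nat :=
  if j < a then 0 else if j < a + b then 1 else if j < a + b + c then 2
  else if j < a + b + c + d then 3 else if j < a + b + c + d + e then 4 else 5.

Definition badj (a b c d e : nat) (i : nat) (j : nat) : bool :=
  match bcls a b c d e j with
  | 0 => i == 0
  | 1 => i == 1
  | 2 => i == 2
  | 3 => i != 0
  | 4 => i != 1
  | _ => i != 2
  end.

Definition brel (a b c d e f : nat) : rel (bvert a b c d e f) :=
  fun x y =>
    match x, y with
    | inl i, inl i' => i != i'
    | inr j, inr j' => j != j'
    | inl i, inr j => badj a b c d e i j
    | inr j, inl i => badj a b c d e i j
    end.

(* p is the interesting factor of (a,b,c,d,e,f): P_G(x) = (x)_k * p(x), where
   P_G is the chromatic polynomial, i.e. P_G(n) = number of proper n-colourings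
   for every natural n (this determines p uniquely). *)
Definition interesting_factor (a b c d e f : nat) (p : {poly rat}) : Prop :=
  forall n : nat,
    ((\prod_(i < bk a b c d e f) (n%:R - i%:R)) * p.[n%:R] : rat)%R
    = ((ncol (@brel a b c d e f) n)%:R)%R.

(* Colour the k-clique first: this takes one of the n^_k injective colourings fr,
   after which v_i may only use colours outside fr(N(v_i)), a set of size
   n - |N(v_i)|.  Counting pairwise distinct triples drawn from three sets by
   inclusion-exclusion expresses the interesting factor as an explicit cubic in the
   sizes of the N(v_i) and of their unions.  For the two bicliques of the theorem
   these sizes are affine in r, s, t and u resp. v, and the claimed reflection is a
   polynomial identity once 2 'C(t+1, 2) = t (t+1) and u + v are substituted. *)

From HB Require Import structures.
From mathcomp Require Import all_boot all_order all_algebra ring zify.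
Set Implicit Arguments. Unset Strict Implicit. Unset Printing Implicit Defensive.
Import Order.TTheory GRing.Theory Num.Theory.
Local Open Scope ring_scope.

Lemma sumr_predC1 (V : zmodType) (I : finType) (x : I) (F : I -> V) :
  \sum_(y | y != x) F y = \sum_y F y - F x.
Proof. by rewrite [X in _ = X - _](bigD1 x) //= addrAC subrr add0r. Qed.

Lemma sum_distinct3 (R : comPzRingType) (I : finType) (A B C : I -> R) :
  \sum_x \sum_y \sum_z (if [&& x != y, x != z & y != z] then A x * B y * C z else 0)
  = (\sum_x A x) * (\sum_x B x) * (\sum_x C x)
    - (\sum_x A x) * (\sum_x B x * C x)
    - (\sum_x B x) * (\sum_x A x * C x)
    - (\sum_x C x) * (\sum_x A x * B x)
    + 2%:R * (\sum_x A x * B x * C x).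
Proof.
have sum_z x y : \sum_z (if [&& x != y, x != z & y != z] then A x * B y * C z else 0)
    = if y != x then A x * B y * (\sum_z C z - C x - C y) else 0.
  have [->|nyx] /= := eqVneq y x; first by rewrite big1 // => z; rewrite eqxx.
  rewrite [in RHS](bigD1 x) // (bigD1 y nyx) /=.
  have cancel (p q w : R) : p + (q + w) - p - q = w by ring.
  rewrite cancel mulr_sumr [in RHS]big_mkcond.
  by apply: eq_bigr => z _; rewrite !(eq_sym z).
have sum_yz x : \sum_y \sum_z (if [&& x != y, x != z & y != z] then A x * B y * C z else 0)
    = A x * (\sum_z C z) * \sum_y B y - A x * C x * \sum_y B y
      - A x * \sum_y B y * C y - A x * B x * \sum_z C z + 2%:R * (A x * B x * C x).
  under eq_bigr => y _ do rewrite sum_z.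
  rewrite -big_mkcond sumr_predC1.
  have -> : \sum_y A x * B y * (\sum_z C z - C x - C y)
      = A x * (\sum_z C z - C x) * \sum_y B y - A x * \sum_y B y * C y.
    by rewrite !mulr_sumr -sumrB; apply: eq_bigr => y _; ring.
  ring.
under eq_bigr => x _ do rewrite sum_yz.
rewrite big_split /= !sumrB -!mulr_suml -mulr_sumr.
ring.
Qed.

Lemma sum_indicator (R : pzSemiRingType) (T : finType) (S : {set T}) :
  \sum_x ((x \in S)%:R : R) = #|S|%:R.
Proof.
rewrite -sum1_card natr_sum [RHS]big_mkcond.
by apply: eq_bigr => x _; case: (x \in S).
Qed.

Lemma sum_indicator2 (R : pzSemiRingType) (T : finType) (S1 S2 : {set T}) :
  \sum_x ((x \in S1)%:R * (x \in S2)%:R : R) = #|S1 :&: S2|%:R.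
Proof. by rewrite -sum_indicator; apply: eq_bigr => x _; rewrite inE -natrM mulnb. Qed.

Lemma sum_indicator3 (R : pzSemiRingType) (T : finType) (S1 S2 S3 : {set T}) :
  \sum_x ((x \in S1)%:R * (x \in S2)%:R * (x \in S3)%:R : R) = #|S1 :&: S2 :&: S3|%:R.
Proof. by rewrite -sum_indicator; apply: eq_bigr => x _; rewrite !inE -!natrM !mulnb. Qed.

Definition distinct_reps3 (T : finType) (F : nat -> {set T}) (p : T * T * T) : bool :=
  let: (x, y, z) := p in
  [&& x != y, x != z & y != z] && [&& x \in F 0%N, y \in F 1%N & z \in F 2%N].

Lemma card_distinct_reps3 (R : comPzRingType) (T : finType) (F : nat -> {set T}) :
  \sum_p ((distinct_reps3 F p)%:R : R) =
    #|F 0%N|%:R * #|F 1%N|%:R * #|F 2%N|%:R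
  - #|F 0%N|%:R * #|F 1%N :&: F 2%N|%:R
  - #|F 1%N|%:R * #|F 0%N :&: F 2%N|%:R
  - #|F 2%N|%:R * #|F 0%N :&: F 1%N|%:R
  + 2%:R * #|F 0%N :&: F 1%N :&: F 2%N|%:R.
Proof.
pose A i (x : T) : R := (x \in F i)%:R.
rewrite -sum_indicator3 -!sum_indicator2 -!sum_indicator.
rewrite -(sum_distinct3 (A 0%N) (A 1%N) (A 2%N)).
rewrite pair_bigA pair_bigA; apply: eq_bigr => -[[x y] z] _.
rewrite /A /= -!natrM !mulnb.
by case: (x != y); case: (x != z); case: (y != z); rewrite //= andbA.
Qed.

Lemma card_setC_imset (R : pzRingType) (T U : finType) (f : T -> U) (S : {set T}) :
  injective f -> (#|~: (f @: S)|%:R : R) = #|U|%:R - #|S|%:R.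
Proof.
by move=> f_inj; rewrite -(cardsC (f @: S)) natrD card_imset // addrAC subrr add0r.
Qed.

Lemma natr_ffact (R : pzRingType) (n k : nat) :
  ((n ^_ k)%:R : R) = \prod_(i < k) (n%:R - i%:R).
Proof.
elim: k => [|k IHk]; first by rewrite ffactn0 big_ord0.
rewrite ffactnSr natrM big_ord_recr /= -IHk.
by case: (leqP k n) => [le_kn|lt_nk]; [rewrite natrB | rewrite ffact_small // !mul0r].
Qed.

Lemma eq_poly_nat (R : numDomainType) (p q : {poly R}) (N : nat) :
  (forall n, (N <= n)%N -> p.[n%:R] = q.[n%:R]) -> p = q.
Proof.
move=> pq; apply/eqP; rewrite -subr_eq0; apply/negPn/negP => pq_neq0.
have roots : all (root (p - q)) [seq ((N + i)%N)%:R | i <- iota 0 (size (p - q))].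
  by apply/allP => _ /mapP[i _ ->]; rewrite /root !hornerE pq ?leq_addr // subrr.
have uniq_roots : uniq [seq ((N + i)%N)%:R : R | i <- iota 0 (size (p - q))].
  by rewrite map_inj_uniq ?iota_uniq // => i j /eqP; rewrite eqr_nat eqn_add2l => /eqP.
by have := max_poly_roots pq_neq0 roots uniq_roots; rewrite size_map size_iota ltnn.
Qed.

(* [badj] as a predicate on block numbers, so that neighbourhoods fall under
   [card_blocks]. *)
Definition block_adj (i m : nat) : bool :=
  match m with
  | 0 => i == 0
  | 1 => i == 1
  | 2 => i == 2
  | 3 => i != 0
  | 4 => i != 1
  | _ => i != 2
  end%N.

(* The factors are [X - |N(v_i)|] and [X - |N(v_i) :|: N(v_j)|]; the last term uses
   [N(v_1) :|: N(v_2) :|: N(v_3)] = the whole k-clique. *)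
Definition interesting_poly (a b c d e f : nat) : {poly rat} :=
    ('X - (a + e + f)%:R%:P) * ('X - (b + d + f)%:R%:P) * ('X - (c + d + e)%:R%:P)
  - ('X - (a + e + f)%:R%:P) * ('X - (b + c + d + e + f)%:R%:P)
  - ('X - (b + d + f)%:R%:P) * ('X - (a + c + d + e + f)%:R%:P)
  - ('X - (c + d + e)%:R%:P) * ('X - (a + b + d + e + f)%:R%:P)
  + 2%:R%:P * ('X - (bk a b c d e f)%:R%:P).

Section BicliqueColourings.
Variables (a b c d e f n : nat).
Local Notation k := (bk a b c d e f).
Local Notation V := (bvert a b c d e f).

Lemma card_blocks (P : pred nat) :
  #|[set j : 'I_k | P (bcls a b c d e j)]| =
  (P 0 * a + P 1 * b + P 2 * c + P 3 * d + P 4 * e + P 5 * f)%N.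
Proof.
have block m l i : (forall j, m <= j < m + l -> bcls a b c d e j = i)%N ->
    (\sum_(m <= j < m + l) (if P (bcls a b c d e j) then 1 else 0) = P i * l)%N.
  move=> cst; have cstP j mj := congr1 (fun m => if P m then 1 else 0)%N (cst j mj).
  by rewrite (eq_big_nat _ _ cstP) sum_nat_const_nat addKn mulnC.
rewrite cardsE -sum1_card big_mkcond /=.
rewrite -(big_mkord xpredT (fun j => if P (bcls a b c d e j) then 1 else 0)%N) /bk.
rewrite (@big_cat_nat _ _ _ (a + b + c + d + e)) ?leq_addr //=.
rewrite (@big_cat_nat _ _ _ (a + b + c + d)) ?leq_addr //=.
rewrite (@big_cat_nat _ _ _ (a + b + c)) ?leq_addr //=.
rewrite (@big_cat_nat _ _ _ (a + b)) ?leq_addr //=.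
rewrite (@big_cat_nat _ _ _ a) ?leq_addr //= -{1}[a]add0n (block 0 a 0)
  ?(block a b 1) ?(block (a + b) c 2) ?(block (a + b + c) d 3)
  ?(block (a + b + c + d) e 4) ?(block (a + b + c + d + e) f 5) //.
all: by move=> j /andP[lo hi]; rewrite /bcls; repeat case: ltnP => ?; lia.
Qed.

Definition nbhd (i : nat) : {set 'I_k} := [set j : 'I_k | badj a b c d e i j].

Definition free_colours (fr : {ffun 'I_k -> 'I_n}) (i : nat) : {set 'I_n} :=
  ~: (fr @: nbhd i).

Definition triangle_colour (p : 'I_n * 'I_n * 'I_n) (i : 'I_3) : 'I_n :=
  if val i == 0%N then p.1.1 else if val i == 1%N then p.1.2 else p.2.

Definition glue (p : 'I_n * 'I_n * 'I_n) (fr : {ffun 'I_k -> 'I_n}) (v : V) : 'I_n :=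
  match v with inl i => triangle_colour p i | inr j => fr j end.

Definition proper (g : V -> 'I_n) : bool :=
  [forall v, forall w, @brel a b c d e f v w ==> (g v != g w)].

Lemma glue_bij : bijective (fun q => [ffun v => glue q.1 q.2 v]).
Proof.
exists (fun g : {ffun V -> 'I_n} =>
  ((g (inl ord0), g (inl (@Ordinal 3 1 isT)), g (inl (@Ordinal 3 2 isT))),
   [ffun j => g (inr j)])).
  by move=> [[[x y] z] fr]; rewrite !ffunE; congr (_, _); apply/ffunP => j; rewrite !ffunE.
move=> g; apply/ffunP => -[i|j]; rewrite !ffunE /= ?ffunE //.
by case: i => -[|[|[|i]]] lt_i3 //; rewrite /triangle_colour /=;
  congr (g (inl _)); exact: val_inj.
Qed.

Lemma free_coloursE fr i col :
  (col \in free_colours fr i) = [forall j : 'I_k, badj a b c d e i j ==> (col != fr j)].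
Proof.
rewrite inE; apply/negP/forallP => [col_nfree j | col_free /imsetP[j j_nbhd col_fr]].
  by apply/implyP => adj; apply/eqP => col_fr; apply: col_nfree; rewrite col_fr imset_f ?inE.
by move: (col_free j); rewrite inE in j_nbhd; rewrite j_nbhd col_fr eqxx.
Qed.

Lemma proper_glue p fr :
  proper (glue p fr) = injectiveb fr && distinct_reps3 (free_colours fr) p.
Proof.
case: p => [[x y] z]; rewrite /distinct_reps3 !free_coloursE.
apply/forallP/andP => [proper_g |
    [/injectiveP fr_inj /andP[/and3P[xy xz yz] /and3P[x0 y1 z2]]]].
  have adj v w : @brel a b c d e f v w -> glue (x, y, z) fr v != glue (x, y, z) fr w.
    exact: (implyP (forallP (proper_g v) w)).
  split.
    by apply/injectiveP => j j' /eqP; apply: contraTeq; exact: (adj (inr j) (inr j')).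
  apply/andP; split; apply/and3P; split.
  - exact: (adj (inl ord0) (inl (@Ordinal 3 1 isT))).
  - exact: (adj (inl ord0) (inl (@Ordinal 3 2 isT))).
  - exact: (adj (inl (@Ordinal 3 1 isT)) (inl (@Ordinal 3 2 isT))).
  - by apply/forallP => j; apply/implyP; exact: (adj (inl ord0) (inr j)).
  - by apply/forallP => j; apply/implyP; exact: (adj (inl (@Ordinal 3 1 isT)) (inr j)).
  - by apply/forallP => j; apply/implyP; exact: (adj (inl (@Ordinal 3 2 isT)) (inr j)).
move=> -[i|j]; apply/forallP => -[i'|j'] /=.
- by case: i i' => [[|[|[|?]]] ?] [[|[|[|?]]] ?]; rewrite //= /triangle_colour /=
    ?(eq_sym y x) ?(eq_sym z x) ?(eq_sym z y).
- by case: i => [[|[|[|?]]] ?]; rewrite //= /triangle_colour /=;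
    [exact: (forallP x0) | exact: (forallP y1) | exact: (forallP z2)].
- by case: i' => [[|[|[|?]]] ?]; rewrite //= /triangle_colour /= eq_sym;
    [exact: (forallP x0) | exact: (forallP y1) | exact: (forallP z2)].
- by apply/implyP; apply: contraNneq => /fr_inj ->.
Qed.

Lemma nbhdE i : nbhd i = [set j : 'I_k | block_adj i (bcls a b c d e j)].
Proof. by apply/setP => j; rewrite !inE. Qed.

Lemma blocksU (P Q : pred nat) :
  [set j : 'I_k | P (bcls a b c d e j)] :|: [set j : 'I_k | Q (bcls a b c d e j)] =
  [set j : 'I_k | predU P Q (bcls a b c d e j)].
Proof. by apply/setP => j; rewrite !inE. Qed.

Lemma sum_free_reps (fr : {ffun 'I_k -> 'I_n}) : injective fr ->
  \sum_p ((distinct_reps3 (free_colours fr) p)%:R : rat) =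
  (interesting_poly a b c d e f).[n%:R].
Proof.
move=> fr_inj; rewrite card_distinct_reps3 /free_colours -!setCU -!imsetU.
rewrite !card_setC_imset // card_ord !nbhdE !blocksU !card_blocks /=.
by rewrite !mul1n !mul0n !add0n !addn0 /interesting_poly !hornerE.
Qed.

Lemma ncol_biclique :
  ((ncol (@brel a b c d e f) n)%:R : rat) =
  (n ^_ k)%:R * (interesting_poly a b c d e f).[n%:R].
Proof.
have -> : ((ncol (@brel a b c d e f) n)%:R : rat) = \sum_p \sum_fr (proper (glue p fr))%:R.
  rewrite /ncol -sum_indicator (reindex _ (onW_bij _ glue_bij)) pair_bigA.
  apply: eq_bigr => -[p fr] _; rewrite inE; congr (nat_of_bool _)%:R.
  by apply: eq_forallb => v; apply: eq_forallb => w; rewrite !ffunE.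
rewrite exchange_big /=.
under eq_bigr => fr _ do under eq_bigr => p _ do rewrite proper_glue -mulnb natrM.
have inj_count : \sum_(fr : {ffun 'I_k -> 'I_n}) ((injectiveb fr)%:R : rat) = (n ^_ k)%:R.
  rewrite -[in RHS](card_ord n) -[in RHS](card_ord k) -card_inj_ffuns -sum_indicator.
  by apply: eq_bigr => fr _; rewrite inE.
rewrite -inj_count mulr_suml; apply: eq_bigr => fr _; rewrite -mulr_sumr.
by case: (injectiveP fr) => [/sum_free_reps -> | _]; rewrite ?mul0r.
Qed.

End BicliqueColourings.

Lemma interesting_factorE a b c d e f p :
  interesting_factor a b c d e f p -> p = interesting_poly a b c d e f.
Proof.
move=> p_factor; apply: (@eq_poly_nat _ _ _ (bk a b c d e f)) => n le_kn.
have := p_factor n; rewrite ncol_biclique -natr_ffact => /mulfI; apply.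
by rewrite pnatr_eq0 -lt0n ffact_gt0.
Qed.

Theorem mainTheorem9 (r s t u v : nat) (g h : {poly rat})
  (huv : (u + v + 2 * r = 4 * s + t ^ 2 + 2 * t + 4)%N)
  (hg : interesting_factor r r s (s + 'C(t.+1, 2)) (s + 'C(t.+2, 2)) u g)
  (hh : interesting_factor r r s (s + 'C(t.+1, 2)) (s + 'C(t.+2, 2)) v h) :
  g = - (h \Po (- 'X + ((6 * s + 2 * t ^ 2 + 4 * t + 6)%N)%:R%:P)).
Proof.
rewrite (interesting_factorE hg) (interesting_factorE hh).
apply: (@eq_poly_nat _ _ _ 0) => x _.
have binS1 : 'C(t.+2, 2) = ('C(t.+1, 2) + t.+1)%N by rewrite binS bin1.
have bin2E : ('C(t.+1, 2)%:R : rat) = (t.+1 * t)%:R / 2%:R.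
  by rewrite -[LHS](@mulfK _ 2%:R) // -natrM muln2 bin2 /= halfK oddM /= andNb subn0.
have uE : (u%:R : rat) = (4 * s + t ^ 2 + 2 * t + 4)%:R - v%:R - (2 * r)%:R.
  by rewrite -huv !natrD; ring.
rewrite binS1; move: 'C(t.+1, 2) bin2E => T TE.
rewrite hornerN horner_comp /interesting_poly /bk !hornerE.
rewrite !natrD uE !natrD !natrM ?natrX TE.
by field.
Qed.
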